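(* Let $\Bbbk$ be a commutative ring of global dimension zero and let $C$ be a $\Bbbk$-coalgebra. The Hattori--Stallings corank $[M]\mapsto \mathrm{cotr}_M(\mathrm{id}_M)$ defines a homomorphism of abelian groups \[K_0^c(C)\longrightarrow \mathrm{coHH}_0(C)^*=\mathrm{Hom}_\Bbbk(\mathrm{coHH}_0(C),\Bbbk).\]
   Context: $\Bbbk$ is a finite product of fields; $\otimes=\otimes_\Bbbk$. $C=(C,\Delta,\varepsilon)$ is a coassociative counital $\Bbbk$-coalgebra; Sweedler notation $\Delta(c)=\sum c_{(1)}\otimes c_{(2)}$, and $\tau$ is the swap. $\mathrm{coHH}_0(C)$ is the kernel of $\Delta-\tau\circ\Delta\colon C\to C\otimes C$. A left $C$-comodule $M$ is finitely cogenerated if there is a $C$-colinear monomorphism $M\hookrightarrow C^{\oplus n}$ for some $n\ge0$; it is injective in the abelian category of left $C$-comodules. $K_0^c(C)$ is the group completion of the commutative monoid (under $\oplus$) of isomorphism classes of finitely cogenerated injective left $C$-comodules. Hattori--Stallings cotrace: for such $M$ choose a $C$-colinear monomorphism $i\colon M\to C^{\oplus n}$ and a $C$-colinear retraction $s\colon C^{\oplus n}\to M$. For a $C$-colinear $f\colon M\to M$, the $C$-colinear endomorphism $i\circ f\circ s$ of the cofree comodule $C^{\oplus n}=C\otimes\Bbbk^n$ corresponds, via ${}_C\mathrm{End}(C\otimes \Bbbk^n)\cong\mathrm{Hom}_\Bbbk(C\otimes\Bbbk^n,\Bbbk^n)\cong\mathrm{Hom}_\Bbbk(C,\mathcal M_n(\Bbbk))$,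 to a $\Bbbk$-linear map $c\mapsto f_c$. Define $\mathrm{cotr}_M(f)\in\mathrm{coHH}_0(C)^*$ by $\mathrm{cotr}_M(f)(c)=\sum\varepsilon(c_{(1)})\,\mathrm{tr}(f_{c_{(2)}})$ for $c\in\mathrm{coHH}_0(C)$. The corank of $M$ is $\mathrm{cotr}_M(\mathrm{id}_M)$. *)

From mathcomp Require Import all_boot all_algebra.
Set Implicit Arguments. Unset Strict Implicit. Unset Printing Implicit Defensive.
Import GRing.Theory.
Local Open Scope ring_scope.

Definition lin (R : pzRingType) (U V : lmodType R) (f : U -> V) : Prop :=
  forall (a : R) (u v : U), f (a *: u + v) = a *: f u + f v.

Definition lin_scalar (R : pzRingType) (U : lmodType R) (f : U -> R) : Prop :=
  forall (a : R) (u v : U), f (a *: u + v) = a * f u + f v.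

Definition projective_mod (R : pzRingType) (P : lmodType R) : Prop :=
  forall (A B : lmodType R) (g : A -> B) (h : P -> B),
    lin g -> lin h -> (forall b, exists a, g a = b) ->
    exists k : P -> A, lin k /\ forall x, g (k x) = h x.

Definition global_dim_zero (R : pzRingType) : Prop :=
  forall P : lmodType R, projective_mod P.

(* Tensor products.  An element of U (x)_R V is represented by a finite list *)
(* of simple tensors [:: (u1,v1); ...] (meaning sum_i u_i (x) v_i); two      *)
(* lists denote the same tensor iff they agree under every R-bilinear map    *)
(* (universal property of the tensor product).  Same for triple tensors.     *)
Definition bilin (R : pzRingType) (U V W : lmodType R) (b : U -> V -> W) :=
  (forall v, lin (b^~ v)) /\ (forall u, lin (b u)).

Definition trilin (R : pzRingType) (U V X W : lmodType R)
  (b : U -> V -> X -> W) :=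
  (forall v x, lin (fun u => b u v x)) /\ (forall u x, lin (fun v => b u v x))
  /\ (forall u v, lin (b u v)).

Definition teq2 (R : pzRingType) (U V : lmodType R) (t t' : seq (U * V)) :=
  forall (W : lmodType R) (b : U -> V -> W), bilin b ->
    \sum_(p <- t) b p.1 p.2 = \sum_(p <- t') b p.1 p.2.

Definition teq3 (R : pzRingType) (U V X : lmodType R)
  (t t' : seq (U * V * X)) :=
  forall (W : lmodType R) (b : U -> V -> X -> W), trilin b ->
    \sum_(p <- t) b p.1.1 p.1.2 p.2 = \sum_(p <- t') b p.1.1 p.1.2 p.2.

Definition tscale (R : pzRingType) (U V : lmodType R) (a : R)
  (t : seq (U * V)) : seq (U * V) := [seq (a *: p.1, p.2) | p <- t].

Definition is_coalgebra (R : comPzRingType) (C : lmodType R)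
  (Delta : C -> seq (C * C)) (eps : C -> R) : Prop :=
  [/\
      forall a x y, teq2 (Delta (a *: x + y)) (tscale a (Delta x) ++ Delta y),
      lin_scalar eps,
      (* coassociativity: (Delta (x) id) Delta = (id (x) Delta) Delta *)
      forall c, teq3 [seq (q.1, q.2, p.2) | p <- Delta c, q <- Delta p.1]
                     [seq (p.1, q.1, q.2) | p <- Delta c, q <- Delta p.2],
      forall c, \sum_(p <- Delta c) eps p.1 *: p.2 = c
    & forall c, \sum_(p <- Delta c) eps p.2 *: p.1 = c].

(* coHH_0(C) = ker (Delta - tau o Delta) *)
Definition coHH0 (R : comPzRingType) (C : lmodType R)
  (Delta : C -> seq (C * C)) (c : C) : Prop :=
  teq2 (Delta c) [seq (p.2, p.1) | p <- Delta c].

Definition is_comodule (R : comPzRingType) (C : lmodType R)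
  (Delta : C -> seq (C * C)) (eps : C -> R)
  (M : lmodType R) (rho : M -> seq (C * M)) : Prop :=
  [/\ forall a x y, teq2 (rho (a *: x + y)) (tscale a (rho x) ++ rho y),
      (* (Delta (x) id) rho = (id (x) rho) rho *)
      forall m, teq3 [seq (q.1, q.2, p.2) | p <- rho m, q <- Delta p.1]
                     [seq (p.1, q.1, q.2) | p <- rho m, q <- rho p.2]
    & forall m, \sum_(p <- rho m) eps p.1 *: p.2 = m].

Definition colinear (R : comPzRingType) (C : lmodType R)
  (M N : lmodType R) (rhoM : M -> seq (C * M)) (rhoN : N -> seq (C * N))
  (f : M -> N) : Prop :=
  lin f /\ forall m, teq2 [seq (p.1, f p.2) | p <- rhoM m] (rhoN (f m)).

Definition injective_comodule (R : comPzRingType) (C : lmodType R)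
  (Delta : C -> seq (C * C)) (eps : C -> R)
  (M : lmodType R) (rho : M -> seq (C * M)) : Prop :=
  forall (A B : lmodType R) (rhoA : A -> seq (C * A)) (rhoB : B -> seq (C * B))
         (g : A -> B) (h : A -> M),
    is_comodule Delta eps rhoA -> is_comodule Delta eps rhoB ->
    colinear rhoA rhoB g -> injective g -> colinear rhoA rho h ->
    exists k : B -> M, colinear rhoB rho k /\ forall a, k (g a) = h a.

(* The cofree comodule C^{(+)n} = C (x) k^n, carrier {ffun 'I_n -> C}. *)
Definition ffun_at (R : pzRingType) (C : lmodType R) (n : nat) (l : 'I_n)
  (x : C) : {ffun 'I_n -> C} := [ffun j => if j == l then x else 0].

Definition rho_cofree (R : comPzRingType) (C : lmodType R)
  (Delta : C -> seq (C * C)) (n : nat) (v : {ffun 'I_n -> C}) :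
  seq (C * {ffun 'I_n -> C}) :=
  flatten [seq [seq (p.1, ffun_at l p.2) | p <- Delta (v l)] | l <- enum 'I_n].

Definition finitely_cogenerated (R : comPzRingType) (C : lmodType R)
  (Delta : C -> seq (C * C)) (M : lmodType R) (rho : M -> seq (C * M)) :=
  exists n (i : M -> {ffun 'I_n -> C}),
    colinear rho (@rho_cofree R C Delta n) i /\ injective i.

Definition cogen_data (R : comPzRingType) (C : lmodType R)
  (Delta : C -> seq (C * C)) (M : lmodType R) (rho : M -> seq (C * M))
  (n : nat) (i : M -> {ffun 'I_n -> C}) (s : {ffun 'I_n -> C} -> M) :=
  [/\ colinear rho (@rho_cofree R C Delta n) i, injective i,
      colinear (@rho_cofree R C Delta n) rho s & forall m, s (i m) = m].

(* Hattori--Stallings cotrace.  For g := i o f o s, the matrix f_c has     *)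
(* (j,l)-entry eps ((g (c e_l)) j), so tr f_c = sum_l eps ((g (c e_l)) l);  *)
(* cotr_M(f)(c) = sum eps(c_(1)) tr(f_(c_(2))).                             *)
Definition mx_trace_at (R : comPzRingType) (C : lmodType R) (eps : C -> R)
  (n : nat) (g : {ffun 'I_n -> C} -> {ffun 'I_n -> C}) (c : C) : R :=
  \sum_(l < n) eps (g (ffun_at l c) l).

Definition cotr (R : comPzRingType) (C : lmodType R)
  (Delta : C -> seq (C * C)) (eps : C -> R) (M : lmodType R)
  (n : nat) (i : M -> {ffun 'I_n -> C}) (s : {ffun 'I_n -> C} -> M)
  (f : M -> M) (c : C) : R :=
  \sum_(p <- Delta c) eps p.1 * mx_trace_at eps (fun v => i (f (s v))) p.2.

Definition corank (R : comPzRingType) (C : lmodType R)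
  (Delta : C -> seq (C * C)) (eps : C -> R) (M : lmodType R)
  (n : nat) (i : M -> {ffun 'I_n -> C}) (s : {ffun 'I_n -> C} -> M) (c : C) :=
  cotr Delta eps i s id c.

Definition rho_sum (R : comPzRingType) (C : lmodType R) (M N : lmodType R)
  (rhoM : M -> seq (C * M)) (rhoN : N -> seq (C * N)) (x : M * N) :
  seq (C * (M * N)) :=
  [seq (p.1, (p.2, 0)) | p <- rhoM x.1] ++ [seq (p.1, (0, p.2)) | p <- rhoN x.2].

Definition fcinj (R : comPzRingType) (C : lmodType R)
  (Delta : C -> seq (C * C)) (eps : C -> R)
  (M : lmodType R) (rho : M -> seq (C * M)) : Prop :=
  [/\ is_comodule Delta eps rho, finitely_cogenerated Delta rho
    & injective_comodule Delta eps rho].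

From mathcomp Require Import all_boot all_algebra.
Set Implicit Arguments. Unset Strict Implicit. Unset Printing Implicit Defensive.
Import GRing.Theory.
Local Open Scope ring_scope.

(* By the counit law, the corank of M at c is the trace at c of the idempotent
   i o s of the cofree comodule C^n.  A colinear map C^n -> C^m is a matrix of
   linear forms on C, and composition of colinear maps is the convolution
   product of these matrices.  At a cocommutative c (an element of coHH_0(C))
   the two factors of the convolution may be swapped, so that
   tr(h o g)(c) = tr(g o h)(c) for colinear g : C^n -> C^m and h : C^m -> C^n.
   Hence, if (j, r) embeds a comodule X as a retract of C^k, a map q o p of
   C^n through X has the trace of j o p o q o r = (j o p) o (q o r) on C^k,
   since q o p = (q o r) o (j o p).  Isomorphism invariance and additivity of
   the corank follow as for the Hattori--Stallings rank of projective modules,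
   and linearity holds because the trace is built from the linear counit. *)

Section LinearMaps.

Variables (R : pzRingType) (U V W : lmodType R).

Lemma lin0 (f : U -> V) : lin f -> f 0 = 0.
Proof.
move=> hf; have := hf 1 0 0; rewrite scaler0 add0r scale1r => E.
by apply: (addrI (f 0)); rewrite addr0 -E.
Qed.

Lemma linD (f : U -> V) : lin f -> {morph f : u v / u + v}.
Proof. by move=> hf u v; rewrite -[u]scale1r hf !scale1r. Qed.

Lemma linZ (f : U -> V) : lin f -> forall a, {morph f : u / a *: u}.
Proof. by move=> hf a u; rewrite -[a *: u]addr0 hf lin0 // addr0. Qed.

Lemma lin_sum (f : U -> V) : lin f -> forall (I : Type) r (P : pred I) F,
  f (\sum_(i <- r | P i) F i) = \sum_(i <- r | P i) f (F i).
Proof. by move=> hf I r P F; apply: (big_morph f (linD hf) (lin0 hf)). Qed.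

Lemma lin_comp (f : U -> V) (g : V -> W) : lin f -> lin g -> lin (g \o f).
Proof. by move=> hf hg a u v /=; rewrite hf hg. Qed.

Lemma teq2_map_snd (V' : lmodType R) (f : V -> V') (t t' : seq (U * V)) :
  lin f -> teq2 t t' ->
  teq2 [seq (p.1, f p.2) | p <- t] [seq (p.1, f p.2) | p <- t'].
Proof.
move=> hf ht W' b [bl br]; rewrite !big_map.
apply: (ht W' (fun x y => b x (f y))); split=> [v|u]; first exact: bl.
by move=> a x y; rewrite hf br.
Qed.

Lemma tensor_map0 (X : lmodType R) (rho : X -> seq (U * V))
    (W' : lmodType R) (b : U -> V -> W') :
  (forall a x y, teq2 (rho (a *: x + y)) (tscale a (rho x) ++ rho y)) ->
  bilin b -> \sum_(p <- rho 0) b p.1 p.2 = 0.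
Proof.
move=> hrho hb; have := hrho 1 0 0 W' b hb.
rewrite scaler0 add0r big_cat /tscale big_map /=.
have scale1E : \sum_(p <- rho 0) b (1 *: p.1) p.2 = \sum_(p <- rho 0) b p.1 p.2.
  by apply: eq_bigr => p _; rewrite scale1r.
move=> E; apply: (addrI (\sum_(p <- rho 0) b p.1 p.2)).
by rewrite addr0 [RHS]E scale1E.
Qed.

End LinearMaps.

Section LinearForms.

Variables (R : pzRingType) (U V : lmodType R).

Lemma lin_scalarP (f : U -> R) : lin_scalar f -> @lin R U R^o f.
Proof. by []. Qed.

Lemma lin_scalarZ (f : U -> R) :
  lin_scalar f -> forall a u, f (a *: u) = a * f u.
Proof. by move=> hf a u; have := linZ (lin_scalarP hf) a u. Qed.

Lemma lin_scalar_comp (f : U -> V) (g : V -> R) :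
  lin f -> lin_scalar g -> lin_scalar (g \o f).
Proof. by move=> hf hg a u v /=; rewrite hf hg. Qed.

End LinearForms.

Lemma bilin_scale_form (R : comPzRingType) (U V : lmodType R) (F : V -> R) :
  lin_scalar F -> bilin (fun (x : U) (y : V) => F y *: x).
Proof.
move=> hF; split=> [v a x y|x a u v]; first by rewrite scalerDr !scalerA mulrC.
by rewrite hF scalerDl scalerA.
Qed.

Lemma bilin_mul_form (R : comPzRingType) (U V : lmodType R)
  (F : V -> R) (G : U -> R) :
  lin_scalar F -> lin_scalar G -> bilin (fun x y => F y * G x : R^o).
Proof.
move=> hF hG; split=> [v a x y|x a u v] /=; first by rewrite hG mulrDr mulrCA.
by rewrite hF mulrDl -mulrA.
Qed.

Section Colinear.

Variables (R : comPzRingType) (C : lmodType R).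

Lemma colinear_comp (X Y Z : lmodType R) (rX : X -> seq (C * X))
  (rY : Y -> seq (C * Y)) (rZ : Z -> seq (C * Z)) (f : X -> Y) (g : Y -> Z) :
  colinear rX rY f -> colinear rY rZ g -> colinear rX rZ (g \o f).
Proof.
move=> [hf cf] [hg cg]; split=> [|x W b hb]; first exact: lin_comp.
rewrite -(cg (f x) W b hb).
by have := teq2_map_snd hg (cf x) hb; rewrite !big_map.
Qed.

Lemma colinear_inv (X Y : lmodType R) (rX : X -> seq (C * X))
  (rY : Y -> seq (C * Y)) (f : X -> Y) (f' : Y -> X) :
  colinear rX rY f -> cancel f f' -> cancel f' f -> colinear rY rX f'.
Proof.
move=> [hf cf] fK f'K.
have hf' : lin f' by move=> a x y; apply: (can_inj fK); rewrite hf !f'K.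
split=> // y W b hb.
have := teq2_map_snd hf' (cf (f' y)) hb; rewrite f'K !big_map /= => <-.
by apply: eq_bigr => p _; rewrite fK.
Qed.

Variables (M N : lmodType R).
Variables (rhoM : M -> seq (C * M)) (rhoN : N -> seq (C * N)).

Lemma colinear_fst : colinear (rho_sum rhoM rhoN) rhoM fst.
Proof.
split=> // x W b hb; rewrite /rho_sum map_cat big_cat !big_map /=.
by rewrite [X in _ + X]big1 ?addr0 // => p _; apply: (lin0 (hb.2 p.1)).
Qed.

Lemma colinear_snd : colinear (rho_sum rhoM rhoN) rhoN snd.
Proof.
split=> // x W b hb; rewrite /rho_sum map_cat big_cat !big_map /=.
by rewrite [X in X + _]big1 ?add0r // => p _; apply: (lin0 (hb.2 p.1)).
Qed.

Variables (Delta : C -> seq (C * C)) (eps : C -> R).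

Lemma colinear_inl : is_comodule Delta eps rhoN ->
  colinear rhoM (rho_sum rhoM rhoN) (fun m => (m, 0)).
Proof.
case=> hN _ _; split=> [a u v|m W b hb].
  by apply: injective_projections => /=; rewrite ?scaler0 ?addr0.
rewrite /rho_sum big_cat !big_map /=.
rewrite (tensor_map0 (b := fun x y => b x (0, y)) hN) ?addr0 //.
split=> [v a x y|x a u v]; first exact: hb.1.
rewrite -hb.2; congr b.
by apply: injective_projections => /=; rewrite ?scaler0 ?addr0.
Qed.

Lemma colinear_inr : is_comodule Delta eps rhoM ->
  colinear rhoN (rho_sum rhoM rhoN) (fun n => (0, n)).
Proof.
case=> hM _ _; split=> [a u v|n W b hb].
  by apply: injective_projections => /=; rewrite ?scaler0 ?addr0.
rewrite /rho_sum big_cat !big_map /=.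
rewrite (tensor_map0 (b := fun x y => b x (y, 0)) hM) ?add0r //.
split=> [v a x y|x a u v]; first exact: hb.1.
rewrite -hb.2; congr b.
by apply: injective_projections => /=; rewrite ?scaler0 ?addr0.
Qed.

End Colinear.

Lemma lin_ffun_at (R : pzRingType) (C : lmodType R) n (l : 'I_n) :
  lin (@ffun_at R C n l).
Proof.
move=> a u v; apply/ffunP => j; rewrite !ffunE.
by case: (j == l); rewrite ?scaler0 ?addr0.
Qed.

Lemma lin_eval (R : pzRingType) (C : lmodType R) n (l : 'I_n) :
  lin (fun v : {ffun 'I_n -> C} => v l).
Proof. by move=> a u v; rewrite !ffunE. Qed.

Lemma ffun_at_sum (R : pzRingType) (C : lmodType R) n (v : {ffun 'I_n -> C}) :
  v = \sum_(l < n) ffun_at l (v l).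
Proof.
apply/ffunP => j; rewrite sum_ffunE (bigD1 j) //= ffunE eqxx big1 ?addr0 //.
by move=> l /negbTE lj; rewrite ffunE eq_sym lj.
Qed.

Section CofreeTrace.

Variables (R : comPzRingType) (C : lmodType R).
Variables (Delta : C -> seq (C * C)) (eps : C -> R).
Hypothesis hC : is_coalgebra Delta eps.

Local Notation cofree n := {ffun 'I_n -> C}.
Local Notation rhoC n := (@rho_cofree R C Delta n).
Local Notation colin n m := (colinear (rhoC n) (rhoC m)).

Let Delta_lin a x y : teq2 (Delta (a *: x + y)) (tscale a (Delta x) ++ Delta y).
Proof. by case: hC. Qed.

Let eps_lin : lin_scalar eps.
Proof. by case: hC. Qed.

Let counit_l c : \sum_(p <- Delta c) eps p.1 *: p.2 = c.
Proof. by case: hC. Qed.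

Let counit_r c : \sum_(p <- Delta c) eps p.2 *: p.1 = c.
Proof. by case: hC. Qed.

Definition mx_coef n m (g : cofree n -> cofree m) j l (x : C) : R :=
  eps (g (ffun_at l x) j).

Lemma mx_trace_atE n (g : cofree n -> cofree n) c :
  mx_trace_at eps g c = \sum_(l < n) mx_coef g l l c.
Proof. by []. Qed.

Lemma lin_mx_coef n m (g : cofree n -> cofree m) j l :
  lin g -> lin_scalar (mx_coef g j l).
Proof. by move=> hg a u v; rewrite /mx_coef lin_ffun_at hg !ffunE eps_lin. Qed.

Lemma lin_mx_trace_at n (g : cofree n -> cofree n) :
  lin g -> lin_scalar (mx_trace_at eps g).
Proof.
move=> hg a u v; rewrite !mx_trace_atE mulr_sumr -big_split /=.
by apply: eq_bigr => l _; rewrite (lin_mx_coef l l hg).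
Qed.

Lemma eq_mx_trace_at n (g g' : cofree n -> cofree n) :
  g =1 g' -> mx_trace_at eps g =1 mx_trace_at eps g'.
Proof. by move=> eq_g c; apply: eq_bigr => l _; rewrite eq_g. Qed.

Lemma mx_trace_atD n (g g' : cofree n -> cofree n) c :
  mx_trace_at eps (fun v => g v + g' v) c
  = mx_trace_at eps g c + mx_trace_at eps g' c.
Proof.
rewrite -big_split; apply: eq_bigr => l _ /=.
by rewrite ffunE (linD (lin_scalarP eps_lin)).
Qed.

Lemma eps_cofreeE n m (h : cofree n -> cofree m) w j :
  lin h -> eps (h w j) = \sum_(l < n) mx_coef h j l (w l).
Proof.
move=> hh; rewrite {1}[w]ffun_at_sum (lin_sum hh) sum_ffunE.
exact: (lin_sum (lin_scalarP eps_lin)).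
Qed.

Lemma sum_rho_cofree n (W : nmodType) (F : C -> cofree n -> W) v :
  \sum_(p <- rho_cofree Delta v) F p.1 p.2
  = \sum_(l < n) \sum_(q <- Delta (v l)) F q.1 (ffun_at l q.2).
Proof.
rewrite /rho_cofree big_flatten /= big_map big_enum /=.
by apply: eq_bigr => l _; rewrite big_map.
Qed.

Lemma colinear_cofreeE n m (g : cofree n -> cofree m) v j : colin n m g ->
  g v j = \sum_(l < n) \sum_(q <- Delta (v l)) mx_coef g j l q.2 *: q.1.
Proof.
case=> hg cg; rewrite /mx_coef.
have := cg v C _ (bilin_scale_form C (lin_scalar_comp (lin_eval j) eps_lin)).
rewrite big_map /= (sum_rho_cofree (fun x w => eps (g w j) *: x)).
rewrite (sum_rho_cofree (fun x (w : cofree m) => eps (w j) *: x)) => ->.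
rewrite (bigD1 j) //= [X in _ + X]big1 ?addr0 => [|l /negbTE lj].
  by under eq_bigr do rewrite ffunE eqxx; rewrite counit_r.
apply: big1 => q _.
by rewrite ffunE eq_sym lj (lin0 (lin_scalarP eps_lin)) scale0r.
Qed.

Lemma colinear_cofree_at n m (g : cofree n -> cofree m) l c j : colin n m g ->
  g (ffun_at l c) j = \sum_(q <- Delta c) mx_coef g j l q.2 *: q.1.
Proof.
move=> hg; rewrite colinear_cofreeE // (bigD1 l) //= ffunE eqxx.
rewrite [X in _ + X]big1 ?addr0 // => i /negbTE il; rewrite ffunE il.
exact: (tensor_map0 Delta_lin (bilin_scale_form C (lin_mx_coef j i hg.1))).
Qed.

Lemma mx_coef_comp n m k (g : cofree n -> cofree m) (h : cofree m -> cofree k)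
    i l c : colin n m g -> lin h ->
  mx_coef (h \o g) i l c
  = \sum_(j < m) \sum_(q <- Delta c) mx_coef h i j q.1 * mx_coef g j l q.2.
Proof.
move=> hg hh; rewrite [LHS]/mx_coef /= (eps_cofreeE _ _ hh).
apply: eq_bigr => j _; have hhij := lin_mx_coef i j hh.
rewrite (colinear_cofree_at _ _ _ hg) (lin_sum (lin_scalarP hhij)).
by apply: eq_bigr => q _; rewrite (lin_scalarZ hhij) mulrC.
Qed.

Lemma mx_trace_at_comm n m (g : cofree n -> cofree m) (h : cofree m -> cofree n)
    c : colin n m g -> colin m n h -> coHH0 Delta c ->
  mx_trace_at eps (h \o g) c = mx_trace_at eps (g \o h) c.
Proof.
move=> hg hh hc; rewrite !mx_trace_atE.
under eq_bigr do rewrite (mx_coef_comp _ _ _ hg hh.1).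
under [RHS]eq_bigr do rewrite (mx_coef_comp _ _ _ hh hg.1).
rewrite [RHS]exchange_big; apply: eq_bigr => l _; apply: eq_bigr => j _.
have := hc R^o _ (bilin_mul_form (lin_mx_coef l j hh.1) (lin_mx_coef j l hg.1)).
rewrite big_map /= => <-.
by apply: eq_bigr => q _; rewrite mulrC.
Qed.

Lemma corank_mx_trace (M : lmodType R) n (i : M -> cofree n) (s : cofree n -> M)
    c : lin i -> lin s -> corank Delta eps i s c = mx_trace_at eps (i \o s) c.
Proof.
move=> hi hs; have hT := lin_mx_trace_at (lin_comp hs hi).
rewrite /corank /cotr -{2}(counit_l c) (lin_sum (lin_scalarP hT)).
by apply: eq_bigr => p _; rewrite (lin_scalarZ hT).
Qed.

Lemma mx_trace_factor (X : lmodType R) (rX : X -> seq (C * X)) n k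
    (j : X -> cofree k) (r : cofree k -> X) (p : cofree n -> X)
    (q : X -> cofree n) c :
  colinear rX (rhoC k) j -> colinear (rhoC k) rX r -> cancel j r ->
  colinear (rhoC n) rX p -> colinear rX (rhoC n) q -> coHH0 Delta c ->
  mx_trace_at eps (q \o p) c = mx_trace_at eps (j \o p \o q \o r) c.
Proof.
move=> hj hr jK hp hq hc.
rewrite (eq_mx_trace_at (g' := (q \o r) \o (j \o p))) => [|v];
  last by rewrite /= jK.
exact: mx_trace_at_comm (colinear_comp hp hj) (colinear_comp hr hq) hc.
Qed.

End CofreeTrace.

Section Corank.

Variables (R : comPzRingType) (C : lmodType R).
Variables (Delta : C -> seq (C * C)) (eps : C -> R).
Hypothesis hC : is_coalgebra Delta eps.

Local Notation cofree n := {ffun 'I_n -> C}.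

Lemma lin_corank (M : lmodType R) n (i : M -> cofree n) (s : cofree n -> M) :
  lin i -> lin s -> lin_scalar (corank Delta eps i s).
Proof.
move=> hi hs a c d; rewrite !(corank_mx_trace hC _ hi hs).
exact: (lin_mx_trace_at hC (lin_comp hs hi)).
Qed.

Lemma corank_iso (M N : lmodType R) (rhoM : M -> seq (C * M))
    (rhoN : N -> seq (C * N)) (phi : M -> N) (phi' : N -> M)
    n (i : M -> cofree n) (s : cofree n -> M)
    n' (i' : N -> cofree n') (s' : cofree n' -> N) c :
  colinear rhoM rhoN phi -> cancel phi phi' -> cancel phi' phi ->
  cogen_data Delta rhoM i s -> cogen_data Delta rhoN i' s' -> coHH0 Delta c ->
  corank Delta eps i s c = corank Delta eps i' s' c.
Proof.
move=> hphi phiK phi'K [hi _ hs sK] [hi' _ hs' sK'] hc.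
rewrite (corank_mx_trace hC _ hi.1 hs.1) (corank_mx_trace hC _ hi'.1 hs'.1).
rewrite (eq_mx_trace_at eps (g' := (i \o phi') \o (phi \o s))) => [|v];
  last by rewrite /= phiK.
have hphi' := colinear_inv hphi phiK phi'K.
rewrite (mx_trace_factor hC hi' hs' sK' (colinear_comp hs hphi)
           (colinear_comp hphi' hi) hc).
by apply: eq_mx_trace_at => v /=; rewrite sK phi'K.
Qed.

Lemma corank_rho_sum (M N : lmodType R) (rhoM : M -> seq (C * M))
    (rhoN : N -> seq (C * N))
    n (i : M -> cofree n) (s : cofree n -> M)
    n' (i' : N -> cofree n') (s' : cofree n' -> N)
    n'' (i'' : M * N -> cofree n'') (s'' : cofree n'' -> M * N) c :
  is_comodule Delta eps rhoM -> is_comodule Delta eps rhoN ->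
  cogen_data Delta rhoM i s -> cogen_data Delta rhoN i' s' ->
  cogen_data Delta (rho_sum rhoM rhoN) i'' s'' -> coHH0 Delta c ->
  corank Delta eps i'' s'' c
  = corank Delta eps i s c + corank Delta eps i' s' c.
Proof.
move=> hM hN [hi _ hs sK] [hi' _ hs' sK'] [hi'' _ hs'' sK''] hc.
rewrite (corank_mx_trace hC _ hi.1 hs.1) (corank_mx_trace hC _ hi'.1 hs'.1).
rewrite (corank_mx_trace hC _ hi''.1 hs''.1).
have pairE (x : M * N) : x = (x.1, 0) + (0, x.2).
  by case: x => x y; apply: injective_projections; rewrite /= ?addr0 ?add0r.
rewrite (eq_mx_trace_at eps (g' := fun v =>
    ((i'' \o (fun m => (m, 0))) \o (fst \o s'')) v
  + ((i'' \o (fun n => (0, n))) \o (snd \o s'')) v)) => [|v]; last first.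
  by rewrite /= {1}[s'' v]pairE (linD hi''.1).
rewrite (mx_trace_atD hC); congr (_ + _).
- rewrite (mx_trace_factor hC hi hs sK (colinear_comp hs'' (colinear_fst _ _))
             (colinear_comp (colinear_inl _ hN) hi'') hc).
  by apply: eq_mx_trace_at => v /=; rewrite sK''.
- rewrite (mx_trace_factor hC hi' hs' sK' (colinear_comp hs'' (colinear_snd _ _))
             (colinear_comp (colinear_inr _ hM) hi'') hc).
  by apply: eq_mx_trace_at => v /=; rewrite sK''.
Qed.

End Corank.

Unset Implicit Arguments.

Theorem theorem2p14 (R : comPzRingType) (hR : global_dim_zero R)
  (C : lmodType R) (Delta : C -> seq (C * C)) (eps : C -> R)
  (hC : is_coalgebra Delta eps) :
  (* (1) the corank of M does not depend on the choice of (i, s), and only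
         depends on the isomorphism class [M] *)
  (forall (M N : lmodType R) (rhoM : M -> seq (C * M)) (rhoN : N -> seq (C * N)),
     fcinj Delta eps rhoM -> fcinj Delta eps rhoN ->
     forall phi : M -> N, colinear rhoM rhoN phi -> bijective phi ->
     forall (n : nat) (i : M -> {ffun 'I_n -> C}) (s : {ffun 'I_n -> C} -> M)
            (n' : nat) (i' : N -> {ffun 'I_n' -> C}) (s' : {ffun 'I_n' -> C} -> N),
     cogen_data Delta rhoM i s -> cogen_data Delta rhoN i' s' ->
     forall c, coHH0 Delta c -> corank Delta eps i s c = corank Delta eps i' s' c)
  /\
  (* (2) the corank is an element of coHH_0(C)^* (R-linear on coHH_0(C)) *)
  (forall (M : lmodType R) (rhoM : M -> seq (C * M)),
     fcinj Delta eps rhoM ->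
     forall (n : nat) (i : M -> {ffun 'I_n -> C}) (s : {ffun 'I_n -> C} -> M),
     cogen_data Delta rhoM i s ->
     forall (a : R) (c d : C), coHH0 Delta c -> coHH0 Delta d ->
     corank Delta eps i s (a *: c + d)
       = a * corank Delta eps i s c + corank Delta eps i s d)
  /\
  (* (3) additivity: corank (M (+) N) = corank M + corank N *)
  (forall (M N : lmodType R) (rhoM : M -> seq (C * M)) (rhoN : N -> seq (C * N)),
     fcinj Delta eps rhoM -> fcinj Delta eps rhoN ->
     forall (n : nat) (i : M -> {ffun 'I_n -> C}) (s : {ffun 'I_n -> C} -> M)
            (n' : nat) (i' : N -> {ffun 'I_n' -> C}) (s' : {ffun 'I_n' -> C} -> N)
            (n'' : nat) (i'' : M * N -> {ffun 'I_n'' -> C})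
            (s'' : {ffun 'I_n'' -> C} -> M * N),
     cogen_data Delta rhoM i s -> cogen_data Delta rhoN i' s' ->
     cogen_data Delta (rho_sum rhoM rhoN) i'' s'' ->
     forall c, coHH0 Delta c ->
     corank Delta eps i'' s'' c = corank Delta eps i s c + corank Delta eps i' s' c).
Proof.
split; [|split].
- move=> M N rhoM rhoN _ _ phi hphi [phi' phiK phi'K] n i s n' i' s' hd hd' c.
  exact: (corank_iso hC hphi phiK phi'K hd hd').
- move=> M rhoM _ n i s [[hi _] _ [hs _] _] a c d _ _.
  exact: (lin_corank hC hi hs).
- move=> M N rhoM rhoN [hM _ _] [hN _ _] n i s n' i' s' n'' i'' s''
    hd hd' hd'' c.
  exact: (corank_rho_sum hC hM hN hd hd' hd'').
Qed.
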